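(* Let $\varphi:\mathbb{R}^n\to\mathbb{R}$ be concave and increasing. For any $\vec q_0\in\mathbb{R}^n$, the function $C:\mathbb{R}^n\to\mathbb{R}$, \[C(\vec q)=\inf\{c\in\mathbb{R}\mid \varphi(c\mathbf 1-\vec q)\ge\varphi(\vec q_0)\},\] is convex, increasing and $\mathbf 1$-invariant. Furthermore, for every history $h\in\mathsf{ValHist}_\varphi((\vec q_0))$ we have $\mathsf{ValTrades}'_C(h)=\mathsf{ValTrades}_\varphi(h)$.
   Context: $\mathbf 1=(1,\dots,1)\in\mathbb{R}^n$. A function $f$ is $\mathbf 1$-invariant if $f(\vec q+\alpha\mathbf 1)=f(\vec q)+\alpha$ for all $\vec q,\alpha$; increasing if $f(\vec q)>f(\vec q')$ whenever $\vec q\succeq\vec q'$ coordinatewise and $\vec q\neq\vec q'$. A history $h$ is a finite list of vectors in $\mathbb{R}^n$, $\vec q_h$ is their sum, and $h\oplus\vec r$ is $h$ with $\vec r$ appended. The CFMM for $\varphi$ is $\mathsf{ValTrades}_\varphi(h)=\{\vec r\mid\varphi(\vec q_h+\vec r)=\varphi(\vec q_h)\}$, and $\mathsf{ValHist}_\varphi((\vec q_0))$ is the smallest set of histories containing the one-element history $(\vec q_0)$ and closed under $h\mapsto h\oplus\vec r$ for $\vec r\in\mathsf{ValTrades}_\varphi(h)$. The cashless cost-function market maker for $C$ is $\mathsf{ValTrades}'_C(h)=\{\vec r+\alpha\mathbf 1\mid\vec r\in\mathbb{R}^n,\ \alpha=C(-\vec q_h-\vec r)-C(-\vec q_h)\}$.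 *)

From HB Require Import structures.
From mathcomp Require Import all_boot all_order all_algebra.
From mathcomp Require Import all_classical all_reals.
Set Implicit Arguments. Unset Strict Implicit. Unset Printing Implicit Defensive.
Import Order.TTheory GRing.Theory Num.Theory.
Local Open Scope ring_scope.
Local Open Scope classical_set_scope.

Section Defs.
Variables (R : realType) (n : nat).
Notation vec := 'rV[R]_n.

Definition ones : vec := const_mx 1.

Definition vge (q q' : vec) : Prop := forall i, q' ord0 i <= q ord0 i.

Definition one_invariant (f : vec -> R) : Prop :=
  forall (q : vec) (a : R), f (q + a *: ones) = f q + a.

Definition increasing (f : vec -> R) : Prop :=
  forall q q' : vec, vge q q' -> q <> q' -> f q' < f q.

Definition concave (f : vec -> R) : Prop :=
  forall (x y : vec) (t : R), 0 <= t <= 1 ->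
    t * f x + (1 - t) * f y <= f (t *: x + (1 - t) *: y).

Definition convex (f : vec -> R) : Prop :=
  forall (x y : vec) (t : R), 0 <= t <= 1 ->
    f (t *: x + (1 - t) *: y) <= t * f x + (1 - t) * f y.

(* histories: finite lists of vectors; q_h is their sum *)
Definition qh (h : seq vec) : vec := \sum_(v <- h) v.

Definition ValTrades (phi : vec -> R) (h : seq vec) : set vec :=
  [set r | phi (qh h + r) = phi (qh h)].

Inductive ValHist (phi : vec -> R) (q0 : vec) : seq vec -> Prop :=
| ValHist_init : ValHist phi q0 [:: q0]
| ValHist_step (h : seq vec) (r : vec) :
    ValHist phi q0 h -> ValTrades phi h r -> ValHist phi q0 (rcons h r).

Definition ValTrades' (C : vec -> R) (h : seq vec) : set vec :=
  [set v | exists r : vec,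
      v = r + (C (- qh h - r) - C (- qh h)) *: ones].

Definition cost_of (phi : vec -> R) (q0 : vec) (q : vec) : R :=
  inf [set c : R | phi q0 <= phi (c *: ones - q)].

End Defs.

From HB Require Import structures.
From mathcomp Require Import all_boot all_order all_algebra.
From mathcomp Require Import all_classical all_reals.
From mathcomp Require Import ring lra.
Import Order.TTheory GRing.Theory Num.Theory.
Local Open Scope ring_scope.
Local Open Scope classical_set_scope.

Set Implicit Arguments.
Unset Strict Implicit.
Unset Printing Implicit Defensive.

(* Along the diagonal direction, g c := phi (c 1 - q) is concave and strictly
   increasing, hence continuous and unbounded below, so C q is the unique
   solution of g c = phi q0.  The identity phi (C q 1 - q) = phi q0 yields all
   the claimed properties of C: convexity from the concavity of phi,
   monotonicity and 1-invariance from uniqueness, and the equality of the two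
   trade sets because C (- q_h) = 0 on every valid history. *)

Section ConcaveLevelSet.
Variables (R : realType) (g : R -> R) (T : R).
Hypothesis g_chord : forall a b c, a < c -> a <= b -> b <= c ->
  (c - b) * g a + (b - a) * g c <= (c - a) * g b.
Hypothesis g_lt : forall x y, x < y -> g x < g y.
Let S := [set c | T <= g c].
Hypothesis S_neq0 : S !=set0.

Lemma concave_level_lbound : has_lbound S.
Proof.
(* Left of -1, g lies below the secant through -1 and 0, which tends to -oo. *)
have slope_gt0 : 0 < g 0 - g (-1) by rewrite subr_gt0 g_lt // ltrN10.
exists (Num.min (-1) ((T - g 0) / (g 0 - g (-1)))) => c Sc.
have [le_1c|lt_c1] := lerP (-1) c; first by rewrite ge_min le_1c.
rewrite ge_min ler_pdivrMr // orbC.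
have := @g_chord c (-1) 0 ltac:(lra) (ltW lt_c1) ltac:(lra).
rewrite /S /= in Sc; nra.
Qed.

Let inf_le {y} : S y -> inf S <= y.
Proof. by move=> Sy; apply: ge_inf concave_level_lbound _ Sy. Qed.

Let slope_gt0 : 0 < g (inf S) - g (inf S - 1).
Proof. by rewrite subr_gt0 g_lt // ltrBlDr ltrDl. Qed.

Lemma concave_level_inf_le : g (inf S) <= T.
Proof.
(* On [C - 1, C], g lies above its chord, so g >= T slightly left of C. *)
set C := inf S; rewrite leNgt; apply/negP => lt_TgC.
set d := Num.min 1 ((g C - T) / (g C - g (C - 1))).
have d_gt0 : 0 < d by rewrite lt_min ltr01 divr_gt0 // subr_gt0.
have d_le1 : d <= 1 by rewrite ge_min lexx.
have d_small : d * (g C - g (C - 1)) <= g C - T.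
  by rewrite -ler_pdivlMr // ge_min lexx orbT.
have SCd : S (C - d).
  have := @g_chord (C - 1) (C - d) C ltac:(lra) ltac:(lra) ltac:(lra).
  rewrite /S /=; nra.
by have := inf_le SCd; lra.
Qed.

Lemma concave_level_inf_ge : T <= g (inf S).
Proof.
(* Right of C, g lies below the secant through C - 1 and C. *)
set C := inf S; rewrite leNgt; apply/negP => lt_gCT.
set e := (T - g C) / (g C - g (C - 1)).
have e_gt0 : 0 < e by rewrite divr_gt0 // subr_gt0.
have [y Sy lt_y] := inf_lt S_neq0 (ltr_pwDr e_gt0 (lexx C)).
have le_Cy := inf_le Sy.
have := @g_chord (C - 1) C y ltac:(lra) ltac:(lra) le_Cy.
have : (y - C) * (g C - g (C - 1)) < T - g C.
  by rewrite -ltr_pdivlMr // ltrBlDl.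
by rewrite /S /= in Sy; nra.
Qed.

Lemma concave_level_inf : g (inf S) = T.
Proof.
by apply/eqP; rewrite eq_le concave_level_inf_le concave_level_inf_ge.
Qed.

End ConcaveLevelSet.

Section CostFunction.
Variables (R : realType) (n : nat).
Implicit Types (phi : 'rV[R]_n -> R) (q v : 'rV[R]_n).

Lemma increasing_le phi q q' : increasing phi -> vge q q' -> phi q' <= phi q.
Proof.
move=> phi_incr qq'; have [->//|neq] := eqVneq q q'.
by apply/ltW/phi_incr => //; apply/eqP.
Qed.

Lemma concave_chord phi v q a b c : concave phi ->
  a < c -> a <= b -> b <= c ->
  (c - b) * phi (a *: v - q) + (b - a) * phi (c *: v - q)
    <= (c - a) * phi (b *: v - q).
Proof.
move=> phi_concave lt_ac le_ab le_bc.
have ca_gt0 : 0 < c - a by rewrite subr_gt0.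
set t := (c - b) / (c - a).
have t01 : 0 <= t <= 1.
  by rewrite divr_ge0 ?ler_pdivrMr ?mul1r /=; lra.
have := phi_concave (a *: v - q) (c *: v - q) t t01.
have -> : t *: (a *: v - q) + (1 - t) *: (c *: v - q) = b *: v - q.
  by apply/rowP => i; rewrite !mxE /t; field; rewrite gt_eqF.
have -> : c - b = (c - a) * t by rewrite mulrC divfK ?gt_eqF.
have -> : b - a = (c - a) * (1 - t) by rewrite /t; field; rewrite gt_eqF.
by rewrite -!mulrA -mulrDr ler_pM2l.
Qed.

Lemma ones_neq0 : (0 < n)%N -> ones R n != 0.
Proof.
move=> n_gt0; apply/eqP => /rowP/(_ (Ordinal n_gt0))/eqP.
by rewrite !mxE oner_eq0.
Qed.

Lemma increasing_diag_lt phi q c c' : (0 < n)%N -> increasing phi ->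
  c < c' -> phi (c *: ones R n - q) < phi (c' *: ones R n - q).
Proof.
move=> n_gt0 phi_incr lt_cc'; apply: phi_incr.
  by move=> i; rewrite !mxE lerD2r ler_pM2r ?ltW // mxE.
move=> /addIr/eqP; rewrite -subr_eq0 -scalerBl scaler_eq0.
by rewrite (negPf (ones_neq0 n_gt0)) orbF subr_eq0 gt_eqF.
Qed.

Lemma increasing_diag_le phi q c c' : (0 < n)%N -> increasing phi ->
  c <= c' -> phi (c *: ones R n - q) <= phi (c' *: ones R n - q).
Proof.
move=> n_gt0 phi_incr; rewrite le_eqVlt => /predU1P[->//|lt_cc'].
exact/ltW/increasing_diag_lt.
Qed.

Lemma qh_rcons (h : seq 'rV[R]_n) r : qh (rcons h r) = qh h + r.
Proof. by rewrite /qh -cats1 big_cat big_seq1. Qed.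

Lemma ValHist_phi_qh phi q0 h : ValHist phi q0 h -> phi (qh h) = phi q0.
Proof.
elim=> [|{}h r _ IH valid_r]; first by rewrite /qh big_seq1.
by rewrite qh_rcons valid_r IH.
Qed.

Variables (phi : 'rV[R]_n -> R) (q0 : 'rV[R]_n).
Hypotheses (n_gt0 : (0 < n)%N) (phi_concave : concave phi)
  (phi_incr : increasing phi).
Local Notation C := (cost_of phi q0).

Lemma cost_of_level_neq0 q : [set c | phi q0 <= phi (c *: ones R n - q)] !=set0.
Proof.
exists (\sum_i `|q ord0 i + q0 ord0 i|); apply: increasing_le => // i.
rewrite !mxE mulr1 lerBrDr addrC (le_trans (ler_norm _)) //.
by rewrite (bigD1 i) //= lerDl sumr_ge0.
Qed.

Lemma phi_cost_of q : phi (C q *: ones R n - q) = phi q0.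
Proof.
apply: (concave_level_inf (g := fun c => phi (c *: ones R n - q))).
- by move=> a b c; apply: concave_chord.
- by move=> c c'; apply: increasing_diag_lt.
- exact: cost_of_level_neq0.
Qed.

Lemma cost_of_unique q c : phi (c *: ones R n - q) = phi q0 -> C q = c.
Proof.
move=> phi_c; have [lt_Cc|lt_cC|//] := ltgtP (C q) c.
- have := increasing_diag_lt q n_gt0 phi_incr lt_Cc.
  by rewrite phi_c (phi_cost_of q) ltxx.
- have := increasing_diag_lt q n_gt0 phi_incr lt_cC.
  by rewrite phi_c (phi_cost_of q) ltxx.
Qed.

Lemma cost_of_convex : convex C.
Proof.
move=> x y t t01; set z := t *: x + (1 - t) *: y.
rewrite leNgt; apply/negP => /(increasing_diag_lt z n_gt0 phi_incr).
rewrite phi_cost_of.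
have -> : (t * C x + (1 - t) * C y) *: ones R n - z =
    t *: (C x *: ones R n - x) + (1 - t) *: (C y *: ones R n - y).
  by apply/rowP => i; rewrite !mxE; ring.
have := phi_concave (C x *: ones R n - x) (C y *: ones R n - y) t01.
by rewrite (phi_cost_of x) (phi_cost_of y); lra.
Qed.

Lemma cost_of_increasing : increasing C.
Proof.
move=> q q' ge_qq' neq_qq'; rewrite ltNge; apply/negP => le_C.
have : phi (C q *: ones R n - q) < phi (C q *: ones R n - q').
  apply: phi_incr => [i|/addrI/oppr_inj/esym//].
  by rewrite !mxE lerD2l lerN2.
rewrite phi_cost_of -(phi_cost_of q') ltNge.
by rewrite (increasing_diag_le q' n_gt0 phi_incr le_C).
Qed.

Lemma cost_of_one_invariant : one_invariant C.
Proof.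
move=> q a; apply: cost_of_unique.
have -> : (C q + a) *: ones R n - (q + a *: ones R n) = C q *: ones R n - q.
  by apply/rowP => i; rewrite !mxE; ring.
exact: phi_cost_of.
Qed.

Lemma ValTrades'_cost_of h :
  ValHist phi q0 h -> ValTrades' C h = ValTrades phi h.
Proof.
move=> /ValHist_phi_qh phi_qh; set Q := qh h.
have C_Q : C (- Q) = 0 by apply: cost_of_unique; rewrite scale0r sub0r opprK.
apply/seteqP; split => v /=.
  case=> r ->; rewrite /ValTrades /= -/Q C_Q subr0.
  have -> : Q + (r + C (- Q - r) *: ones R n)
            = C (- Q - r) *: ones R n - (- Q - r).
    by apply/rowP => i; rewrite !mxE; ring.
  by rewrite phi_cost_of phi_qh.
rewrite /ValTrades /= -/Q => phi_Qv; exists v.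
suff -> : C (- Q - v) = 0 by rewrite C_Q subr0 scale0r addr0.
by apply: cost_of_unique; rewrite scale0r sub0r opprB opprK addrC phi_Qv.
Qed.

End CostFunction.

Theorem theorem3p4 (R : realType) (n : nat) (n_gt0 : (0 < n)%N)
  (phi : 'rV[R]_n -> R) (q0 : 'rV[R]_n) :
  concave phi -> increasing phi ->
  let C := cost_of phi q0 in
  [/\ convex C, increasing C, one_invariant C &
      forall h : seq 'rV[R]_n, ValHist phi q0 h ->
        ValTrades' C h = ValTrades phi h].
Proof.
move=> phi_concave phi_incr C; split.
- exact: cost_of_convex.
- exact: cost_of_increasing.
- exact: cost_of_one_invariant.
- exact: ValTrades'_cost_of.
Qed.
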